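(* Let $S$ be a compact metric space and $h:\mathbb{R}^d\times S\to\mathbb{R}^d$ a jointly continuous map for which there is $L>0$ with $\lVert h(x_1,y)-h(x_2,y)\rVert\le L\lVert x_1-x_2\rVert$ for all $x_1,x_2\in\mathbb{R}^d$, $y\in S$. For $c\ge 1$ put $h_c(x,y):=h(cx,y)/c$, and let $h_\infty(x,y)$ be the set of all $u\in\mathbb{R}^d$ with $\liminf_{c\to\infty}\lVert h_c(x,y)-u\rVert=0$. Assume (S1): whenever $c_n\uparrow\infty$, $y_n\to y$ in $S$, $x\in\mathbb{R}^d$ and $\lim_{n\to\infty}h_{c_n}(x,y_n)=u$ for some $u\in\mathbb{R}^d$, then $u\in h_\infty(x,y)$. Suppose $x_n\to x$ in $\mathbb{R}^d$, $y_n\to y$ in $S$, $c_n\uparrow\infty$ and $\lim_{n\to\infty}h_{c_n}(x_n,y_n)=u$. Then $u\in h_\infty(x,y)$. *)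

From HB Require Import structures.
From mathcomp Require Import all_boot all_order all_algebra.
From mathcomp Require Import all_classical all_reals all_analysis.
Set Implicit Arguments. Unset Strict Implicit. Unset Printing Implicit Defensive.
Import Order.TTheory GRing.Theory Num.Theory.
Import numFieldNormedType.Exports.
Local Open Scope classical_set_scope.
Local Open Scope ring_scope.

(* R^d is represented by row vectors 'rV[R]_d; ||.|| is the Euclidean norm. *)
Definition enorm {R : realType} {d : nat} (v : 'rV[R]_d) : R :=
  Num.sqrt (\sum_(i < d) (v ord0 i) ^+ 2).

Definition hc {R : realType} {d : nat} {S : Type}
  (h : 'rV[R]_d -> S -> 'rV[R]_d) (c : R) (x : 'rV[R]_d) (y : S) : 'rV[R]_d :=
  c^-1 *: h (c *: x) y.

(* h_oo(x,y) := { u | liminf_{c -> oo, c >= 1} ||h_c(x,y) - u|| = 0 }.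
   Since the function is nonnegative, liminf = 0 unfolds to: for every
   eps > 0 and every bound M there is c >= M (c >= 1) with value < eps. *)
Definition h_infty {R : realType} {d : nat} {S : Type}
  (h : 'rV[R]_d -> S -> 'rV[R]_d) (x : 'rV[R]_d) (y : S) : set 'rV[R]_d :=
  [set u | forall eps : R, 0 < eps -> forall M : R,
     exists c : R, M <= c /\ 1 <= c /\ enorm (hc h c x y - u) < eps].

From HB Require Import structures.
From mathcomp Require Import all_boot all_order all_algebra.
From mathcomp Require Import all_classical all_reals all_analysis.
Import Order.TTheory GRing.Theory Num.Theory.
Import numFieldNormedType.Exports.
Local Open Scope classical_set_scope.
Local Open Scope ring_scope.

(* Rescaling preserves the Lipschitz constant: every h_c(., y) is L-Lipschitz.
   Hence h_{c_n}(x, y_n) and h_{c_n}(x_n, y_n) differ by at most L ||x - x_n||,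
   which tends to 0, so h_{c_n}(x, y_n) -> u as well and (S1) applies at the
   fixed point x. *)

Lemma row_coef_le_norm {R : realType} {d : nat} (v : 'rV[R]_d) (i : 'I_d) :
  `|v ord0 i| <= `|v|.
Proof.
have -> : `|v| = mx_norm v by [].
rewrite mx_normrE.
exact: (le_bigmax _ (fun ij : 'I_1 * 'I_d => `|v ij.1 ij.2|) (ord0, i)).
Qed.

Lemma enormZ {R : realType} {d : nat} (a : R) (v : 'rV[R]_d) :
  enorm (a *: v) = `|a| * enorm v.
Proof.
rewrite /enorm.
under eq_bigr => i _ do rewrite mxE exprMn.
by rewrite -mulr_sumr sqrtrM ?sqr_ge0 // sqrtr_sqr.
Qed.

Lemma normr_le_enorm {R : realType} {d : nat} (v : 'rV[R]_d) : `|v| <= enorm v.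
Proof.
have -> : `|v| = mx_norm v by [].
have [->|] := eqVneq (mx_norm v) 0; first by rewrite sqrtr_ge0.
move=> /mx_norm_neq0 [[i j] ->] /=.
rewrite (ord1 i) /enorm -sqrtr_sqr ler_wsqrtr //.
rewrite (bigD1 j) //= lerDl sumr_ge0 // => k _; exact: sqr_ge0.
Qed.

Lemma enorm_le_sqrt_dim {R : realType} {d : nat} (v : 'rV[R]_d) :
  enorm v <= Num.sqrt d%:R * `|v|.
Proof.
rewrite /enorm -(ger0_norm (normr_ge0 v)) -sqrtr_sqr -sqrtrM ?ler0n //.
apply: ler_wsqrtr.
rewrite mulr_natl -[X in _ *+ X](card_ord d) -sumr_const ler_sum // => i _.
by rewrite -real_normK ?num_real // ler_sqr ?nnegrE // row_coef_le_norm.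
Qed.

Lemma hc_lipschitz {R : realType} {d : nat} {S : Type}
    {h : 'rV[R]_d -> S -> 'rV[R]_d} {L c : R} (x1 x2 : 'rV[R]_d) (y : S) :
  (forall z1 z2 : 'rV[R]_d, enorm (h z1 y - h z2 y) <= L * enorm (z1 - z2)) ->
  0 < c -> enorm (hc h c x1 y - hc h c x2 y) <= L * enorm (x1 - x2).
Proof.
move=> h_lip c_gt0.
have c_inv_ge0 : 0 <= c^-1 by rewrite invr_ge0 ltW.
rewrite /hc -scalerBr enormZ ger0_norm //.
apply: le_trans (ler_wpM2l c_inv_ge0 (h_lip (c *: x1) (c *: x2))) _.
by rewrite -scalerBr enormZ ger0_norm ?(ltW c_gt0) // mulrCA mulKf // lt0r_neq0.
Qed.

Lemma cvg_of_dist_le {R : realType} {V W : normedModType R}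
    {f g : nat -> V} {a : nat -> W} {a0 : W} {u : V} (K : R) :
  a n @[n --> \oo] --> a0 -> g n @[n --> \oo] --> u ->
  (forall n, `|f n - g n| <= K * `|a n - a0|) ->
  f n @[n --> \oo] --> u.
Proof.
move=> a_cvg g_cvg fg_le.
have fg_cvg0 : (f n - g n) @[n --> \oo] --> (0 : V).
  apply/cvgr0Pnorm_lt => e e_gt0.
  have K1_gt0 : 0 < `|K| + 1 by rewrite ltr_wpDl.
  move/cvgrPdist_lt: a_cvg => /(_ (e / (`|K| + 1))) [|N _ aN].
    by rewrite divr_gt0.
  exists N => // n /aN; rewrite distrC => a_near.
  apply: le_lt_trans (fg_le n) _.
  apply: (@le_lt_trans _ _ ((`|K| + 1) * `|a n - a0|)).
    by rewrite ler_wpM2r // (le_trans (ler_norm K)) // lerDl.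
  by rewrite -ltr_pdivlMl // mulrC.
have -> : f = (fun n => (f n - g n) + g n) by apply: funext => n; rewrite subrK.
by rewrite -[u]add0r; apply: cvgD.
Qed.

Theorem lemma1 (R : realType) (d : nat) (S : pseudoMetricType R)
  (h : 'rV[R]_d -> S -> 'rV[R]_d)
  (S_compact : compact [set: S]) (S_hausdorff : hausdorff_space S)
  (h_cont : continuous (fun p : 'rV[R]_d * S => h p.1 p.2))
  (L : R) (L_gt0 : 0 < L)
  (h_lip : forall (x1 x2 : 'rV[R]_d) (y : S),
     enorm (h x1 y - h x2 y) <= L * enorm (x1 - x2))
  (S1 : forall (c : nat -> R) (yn : nat -> S) (y : S) (x u : 'rV[R]_d),
     (forall n, 1 <= c n) ->
     (forall m n, (m <= n)%N -> c m <= c n) ->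
     c n @[n --> \oo] --> +oo ->
     yn n @[n --> \oo] --> y ->
     hc h (c n) x (yn n) @[n --> \oo] --> u ->
     h_infty h x y u)
  (xn : nat -> 'rV[R]_d) (x : 'rV[R]_d) (yn : nat -> S) (y : S)
  (c : nat -> R) (u : 'rV[R]_d)
  (hx : xn n @[n --> \oo] --> x)
  (hy : yn n @[n --> \oo] --> y)
  (hc1 : forall n, 1 <= c n)
  (hcmono : forall m n, (m <= n)%N -> c m <= c n)
  (hcinf : c n @[n --> \oo] --> +oo)
  (hu : hc h (c n) (xn n) (yn n) @[n --> \oo] --> u) :
  h_infty h x y u.
Proof.
apply: (S1 c yn y x u hc1 hcmono hcinf hy).
apply: (cvg_of_dist_le (L * Num.sqrt d%:R) hx hu) => n.
have c_gt0 : 0 < c n by apply: lt_le_trans (hc1 n).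
apply: le_trans (normr_le_enorm _) _.
apply: le_trans (hc_lipschitz _ _ _ (fun z1 z2 => h_lip z1 z2 (yn n)) c_gt0) _.
rewrite -mulrA distrC; apply: ler_wpM2l; first exact: ltW.
exact: enorm_le_sqrt_dim.
Qed.
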